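(* Let $v = \pi \sqrt{3n/2}$, $v^+ = \pi \sqrt{3(n+1)/2}$, $v^- = \pi \sqrt{3(n-1)/2}$. For all integers $n \geq 2363$, $$\frac{v}{\sqrt{v^+ v^-}}\, \Xi(n) \leq \frac{I_2(v^-)\, I_2(v^+)}{I_2(v)^2} \leq \frac{v}{\sqrt{v^+ v^-}}\, \Psi(n),$$ where $$\Xi(n) = \left(1- \frac{9\pi^4}{16 v^3}- \frac{27 \pi^6}{8 v^5} - \frac{405 \pi^8}{2048 v^7}\right) \left( 1-\frac{309}{v^5}-\frac{535}{v^6}\right),$$ $$\Psi(n) = \left(1-\frac{9\pi^4}{16 v^3}+\frac{81 \pi^8}{256 v^6}\right) \left( 1-\frac{308}{v^5}-\frac{286}{v^6} \right).$$
   Context: $I_2$ denotes the modified Bessel function of the first kind of order 2. *)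

From Stdlib Require Import Reals Factorial.
From Coquelicot Require Import Coquelicot.
Open Scope R_scope.

Definition besselI2 (x : R) : R :=
  Series (fun k : nat => (x / 2) ^ (2 * k + 2) / (INR (fact k) * INR (fact (k + 2)))).

Definition bv (n : nat) : R := PI * sqrt (3 * INR n / 2).
Definition bvp (n : nat) : R := PI * sqrt (3 * (INR n + 1) / 2).
Definition bvm (n : nat) : R := PI * sqrt (3 * (INR n - 1) / 2).

Definition Xi (n : nat) : R :=
  let v := bv n in
  (1 - 9 * PI ^ 4 / (16 * v ^ 3) - 27 * PI ^ 6 / (8 * v ^ 5)
     - 405 * PI ^ 8 / (2048 * v ^ 7))
  * (1 - 309 / v ^ 5 - 535 / v ^ 6).

Definition Psi (n : nat) : R :=
  let v := bv n in
  (1 - 9 * PI ^ 4 / (16 * v ^ 3) + 81 * PI ^ 8 / (256 * v ^ 6))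
  * (1 - 308 / v ^ 5 - 286 / v ^ 6).

From Stdlib Require Import Reals Lra Lia Factorial Machin.
From Coquelicot Require Import Coquelicot.
Open Scope R_scope.

(* Since I_2 solves y'' = (1 + 4/x^2) y - y'/x, its logarithmic derivative solves a Riccati
   equation. Super- and sub-solutions U_up, U_lo, obtained from the asymptotic expansion
   1 - 1/(2x) + 15/(8x^2) + ... plus exponentially small corrections, bound I_2'/I_2 for x >= 20;
   integrating gives exp(P_lo(b) - P_lo(a)) <= I_2(b)/I_2(a) <= exp(P_up(b) - P_up(a)) for
   20 <= a <= b, where P_up' = U_up and P_lo' = U_lo. Applied to (v, v+) and (v-, v), this squeezes
   I_2(v-) I_2(v+) / I_2(v)^2 between exponentials of second differences of P_up and P_lo.
   As (v+-)^2 = v^2 +- a with a = 3 pi^2/2, the binomial series of sqrt(1 +- a/v^2) expands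
   these second differences in powers of 1/v: the logarithms give the factor v / sqrt(v+ v-),
   and the rest is bounded by polynomials in 1/v, compared with Xi and Psi via
   1 + x <= e^x <= 1 + x + x^2/2 (x <= 0). *)

(** * The power series of I_2 *)

Definition bessel_coef (k : nat) : R := / (INR (fact k) * INR (fact (k + 2))).

Lemma bessel_coef_pos k : 0 < bessel_coef k.
Proof.
  apply Rinv_0_lt_compat, Rmult_lt_0_compat; apply lt_0_INR, lt_O_fact.
Qed.

Lemma bessel_coef_S k : bessel_coef k = (INR k + 1) * (INR k + 3) * bessel_coef (S k).
Proof.
  unfold bessel_coef. replace (S k + 2)%nat with (S (k + 2)) by lia.
  rewrite !fact_simpl, !mult_INR, !S_INR, plus_INR.
  pose proof (lt_0_INR _ (lt_O_fact k)). pose proof (lt_0_INR _ (lt_O_fact (k + 2))).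
  pose proof (pos_INR k). simpl. field. lra.
Qed.

Lemma CV_radius_bessel_coef : CV_radius bessel_coef = p_infty.
Proof.
  apply CV_radius_infinite_DAlembert.
  - intro k; apply Rgt_not_eq, bessel_coef_pos.
  - apply is_lim_seq_le_le with (u := fun _ => 0) (w := fun k => / (INR k + 1)).
    + intro k. pose proof (pos_INR k). pose proof (bessel_coef_pos (S k)).
      rewrite (bessel_coef_S k), Rabs_pos_eq.
      2:{ apply Rlt_le, Rdiv_lt_0_compat; nra. }
      replace (bessel_coef (S k) / ((INR k + 1) * (INR k + 3) * bessel_coef (S k)))
        with (/ ((INR k + 1) * (INR k + 3))) by (field; lra).
      split; [apply Rlt_le, Rinv_0_lt_compat; nra | apply Rinv_le_contravar; nra].
    + apply is_lim_seq_const.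
    + replace (Finite 0) with (Rbar_inv p_infty) by reflexivity.
      apply is_lim_seq_inv; [|discriminate].
      apply is_lim_seq_ext with (u := fun k => INR (S k)); [intro; apply S_INR|].
      apply (is_lim_seq_incr_1 INR p_infty), is_lim_seq_INR.
Qed.

Lemma CV_radius_PS_derive_bessel_coef : CV_radius (PS_derive bessel_coef) = p_infty.
Proof. rewrite CV_radius_derive; apply CV_radius_bessel_coef. Qed.

Lemma CV_radius_PS_derive2_bessel_coef : CV_radius (PS_derive (PS_derive bessel_coef)) = p_infty.
Proof. rewrite CV_radius_derive; apply CV_radius_PS_derive_bessel_coef. Qed.

Lemma Rbar_lt_CV_radius_p_infty (c : nat -> R) t :
  CV_radius c = p_infty -> Rbar_lt (Rabs t) (CV_radius c).
Proof. intros ->; exact I. Qed.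

Definition bessel_g (t : R) : R := PSeries bessel_coef t.
Definition bessel_dg (t : R) : R := PSeries (PS_derive bessel_coef) t.
Definition bessel_ddg (t : R) : R := PSeries (PS_derive (PS_derive bessel_coef)) t.

Lemma is_derive_bessel_g t : is_derive bessel_g t (bessel_dg t).
Proof. apply is_derive_PSeries, Rbar_lt_CV_radius_p_infty, CV_radius_bessel_coef. Qed.

Lemma is_derive_bessel_dg t : is_derive bessel_dg t (bessel_ddg t).
Proof. apply is_derive_PSeries, Rbar_lt_CV_radius_p_infty, CV_radius_PS_derive_bessel_coef. Qed.

Lemma bessel_g_ode t : t * bessel_ddg t + 3 * bessel_dg t = bessel_g t.
Proof.
  unfold bessel_g, bessel_dg, bessel_ddg.
  rewrite <- PSeries_incr_1, <- PSeries_scal, <- PSeries_plus.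
  2:{ apply ex_pseries_incr_1, CV_radius_inside, Rbar_lt_CV_radius_p_infty.
      apply CV_radius_PS_derive2_bessel_coef. }
  2:{ apply ex_pseries_scal; [apply Rmult_comm|].
      apply CV_radius_inside, Rbar_lt_CV_radius_p_infty, CV_radius_PS_derive_bessel_coef. }
  apply PSeries_ext. intros [|k];
    unfold PS_plus, PS_scal, PS_incr_1, PS_derive, plus, scal, zero; simpl; unfold mult; simpl.
  - unfold bessel_coef; simpl. field.
  - replace (match k with 0%nat => 1 | S _ => INR k + 1 end) with (INR (S k))
      by (destruct k; reflexivity).
    rewrite (bessel_coef_S (S k)), !S_INR. ring.
Qed.

Lemma ex_series_bessel_coef t : ex_series (fun k => bessel_coef k * t ^ k).
Proof. apply ex_pseries_R, CV_radius_inside, Rbar_lt_CV_radius_p_infty, CV_radius_bessel_coef. Qed.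

Lemma PS_derive_bessel_coef k : PS_derive bessel_coef k = bessel_coef k / (INR k + 3).
Proof.
  unfold PS_derive. rewrite (bessel_coef_S k), S_INR.
  pose proof (pos_INR k). field. lra.
Qed.

Lemma Series_nonneg (u : nat -> R) : (forall k, 0 <= u k) -> ex_series u -> 0 <= Series u.
Proof.
  intros Hu Hex.
  replace 0 with (Series (fun _ => 0 * 0)) by (rewrite Series_scal_l; ring).
  apply Series_le; [|exact Hex]. intro k; split; [lra|]. rewrite Rmult_0_l; apply Hu.
Qed.

Lemma bessel_g_pos t : 0 <= t -> 0 < bessel_g t.
Proof.
  intro Ht. unfold bessel_g, PSeries.
  rewrite Series_incr_1 by apply ex_series_bessel_coef.
  pose proof (bessel_coef_pos 0).
  assert (0 <= Series (fun k => bessel_coef (S k) * t ^ S k)).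
  { apply Series_nonneg.
    - intro k. apply Rmult_le_pos; [apply Rlt_le, bessel_coef_pos | apply pow_le; lra].
    - apply (ex_series_incr_1 (fun k => bessel_coef k * t ^ k)), ex_series_bessel_coef. }
  rewrite pow_O, Rmult_1_r. lra.
Qed.

Lemma bessel_dg_bounds t : 0 <= t -> 0 <= bessel_dg t <= bessel_g t / 3.
Proof.
  intro Ht. unfold bessel_dg, bessel_g, PSeries.
  assert (Hterm : forall k, 0 <= PS_derive bessel_coef k * t ^ k <= / 3 * (bessel_coef k * t ^ k)).
  { intro k. rewrite PS_derive_bessel_coef.
    pose proof (bessel_coef_pos k). pose proof (pos_INR k).
    assert (0 <= t ^ k) by (apply pow_le; lra).
    assert (bessel_coef k / (INR k + 3) <= bessel_coef k / 3).
    { apply Rmult_le_compat_l; [lra|]. apply Rinv_le_contravar; lra. }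
    split; [apply Rmult_le_pos; [apply Rlt_le, Rdiv_lt_0_compat|]; lra|].
    replace (/ 3 * (bessel_coef k * t ^ k)) with (bessel_coef k / 3 * t ^ k) by (unfold Rdiv; ring).
    apply Rmult_le_compat_r; lra. }
  split.
  - apply Series_nonneg; [apply Hterm|].
    apply ex_pseries_R, CV_radius_inside, Rbar_lt_CV_radius_p_infty.
    apply CV_radius_PS_derive_bessel_coef.
  - unfold Rdiv. rewrite Rmult_comm, <- Series_scal_l.
    apply Series_le; [apply Hterm|].
    exact (ex_series_scal_l (/ 3) _ (ex_series_bessel_coef t)).
Qed.

Definition quarter_sq (x : R) : R := x ^ 2 / 4.

(* The second derivative is simplified with [bessel_g_ode]. *)
Definition dbesselI2 (x : R) : R :=
  x / 2 * (bessel_g (quarter_sq x) + quarter_sq x * bessel_dg (quarter_sq x)).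
Definition ddbesselI2 (x : R) : R :=
  (bessel_g (quarter_sq x) + quarter_sq x * bessel_dg (quarter_sq x)) / 2
  + quarter_sq x * (bessel_g (quarter_sq x) - bessel_dg (quarter_sq x)).

Lemma besselI2_eq x : besselI2 x = quarter_sq x * bessel_g (quarter_sq x).
Proof.
  unfold besselI2, bessel_g, PSeries, quarter_sq.
  rewrite <- Series_scal_l. apply Series_ext. intro k.
  replace (2 * k + 2)%nat with (2 * (k + 1))%nat by lia.
  rewrite pow_mult, pow_add. replace ((x / 2) ^ 2) with (x ^ 2 / 4) by field.
  change (scal ?a ?b) with (a * b). unfold bessel_coef, Rdiv. ring.
Qed.

Lemma is_derive_quarter_sq x : is_derive quarter_sq x (x / 2).
Proof. unfold quarter_sq; auto_derive; [exact I | field]. Qed.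

Lemma is_derive_comp_quarter_sq (f df : R -> R) x : (forall t, is_derive f t (df t)) ->
  is_derive (fun x => f (quarter_sq x)) x (x / 2 * df (quarter_sq x)).
Proof.
  intro Hf. apply (is_derive_comp f quarter_sq); [apply Hf | apply is_derive_quarter_sq].
Qed.

Lemma is_derive_eq (f : R -> R) x d1 d2 : is_derive f x d1 -> d1 = d2 -> is_derive f x d2.
Proof. intros H ->; exact H. Qed.

Lemma is_derive_besselI2 x : is_derive besselI2 x (dbesselI2 x).
Proof.
  apply is_derive_ext with (f := fun x => quarter_sq x * bessel_g (quarter_sq x)).
  { intro; symmetry; apply besselI2_eq. }
  eapply is_derive_eq.
  - apply (is_derive_mult quarter_sq (fun x => bessel_g (quarter_sq x)));
      [apply is_derive_quarter_sq | apply is_derive_comp_quarter_sq, is_derive_bessel_g |].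
    intros; apply Rmult_comm.
  - unfold dbesselI2, plus, mult, scal; simpl; unfold mult; simpl. ring.
Qed.

Lemma is_derive_dbesselI2 x : is_derive dbesselI2 x (ddbesselI2 x).
Proof.
  eapply is_derive_eq.
  - apply (is_derive_mult (fun x => x / 2)
      (fun x => bessel_g (quarter_sq x) + quarter_sq x * bessel_dg (quarter_sq x))).
    + auto_derive; [exact I | reflexivity].
    + apply (is_derive_plus (fun x => bessel_g (quarter_sq x))
        (fun x => quarter_sq x * bessel_dg (quarter_sq x))).
      * apply is_derive_comp_quarter_sq, is_derive_bessel_g.
      * apply (is_derive_mult quarter_sq (fun x => bessel_dg (quarter_sq x)));
          [apply is_derive_quarter_sq | apply is_derive_comp_quarter_sq, is_derive_bessel_dg |].
        intros; apply Rmult_comm.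
    + intros; apply Rmult_comm.
  - unfold ddbesselI2, plus, mult, scal; simpl; unfold mult; simpl.
    pose proof (bessel_g_ode (quarter_sq x)) as E.
    replace (bessel_g (quarter_sq x) - bessel_dg (quarter_sq x))
      with (2 * bessel_dg (quarter_sq x) + quarter_sq x * bessel_ddg (quarter_sq x)) by lra.
    unfold quarter_sq; field.
Qed.

Lemma besselI2_ode x : x <> 0 -> ddbesselI2 x = (1 + 4 / x ^ 2) * besselI2 x - dbesselI2 x / x.
Proof. intro. rewrite besselI2_eq. unfold ddbesselI2, dbesselI2, quarter_sq. field. assumption. Qed.

Lemma besselI2_pos x : 0 < x -> 0 < besselI2 x.
Proof.
  intro. rewrite besselI2_eq. apply Rmult_lt_0_compat.
  - unfold quarter_sq; nra.
  - apply bessel_g_pos. unfold quarter_sq; nra.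
Qed.

Lemma dbesselI2_bounds x : 0 < x -> 0 <= dbesselI2 x <= (2 / x + x / 6) * besselI2 x.
Proof.
  intro. rewrite besselI2_eq. unfold dbesselI2.
  assert (Hq : 0 <= quarter_sq x) by (unfold quarter_sq; nra).
  pose proof (bessel_g_pos _ Hq). pose proof (bessel_dg_bounds _ Hq).
  replace ((2 / x + x / 6) * (quarter_sq x * bessel_g (quarter_sq x)))
    with (x / 2 * (bessel_g (quarter_sq x) + quarter_sq x * (bessel_g (quarter_sq x) / 3)))
    by (unfold quarter_sq; field; lra).
  split; apply Rmult_le_compat_l || apply Rmult_le_pos; nra.
Qed.

(** * Riccati comparison for the modified Bessel equation of order 2 *)

Lemma le_of_is_derive_nonneg (f df : R -> R) a b : a <= b ->
  (forall t, a <= t <= b -> is_derive f t (df t)) ->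
  (forall t, a <= t <= b -> 0 <= df t) -> f a <= f b.
Proof.
  intros Hab Hd Hpos. destruct (Req_dec a b) as [->|Hne]; [lra|].
  destruct (MVT_cor2 f df a b) as [t [Ht1 Ht2]]; [lra| |].
  - intros t Ht. apply is_derive_Reals, Hd; lra.
  - assert (0 <= df t) by (apply Hpos; lra). nra.
Qed.

(* [y'/y] solves [z' = 1 + 4/x^2 - z/x - z^2]; [U] is a super-solution where this residual is
   nonnegative and a sub-solution where it is nonpositive. *)
Definition riccati_residual (U dU : R -> R) (x : R) : R :=
  dU x + U x / x + U x ^ 2 - 1 - 4 / x ^ 2.

Lemma ratio_le_exp_of_damped u v p q : 0 < v ->
  u * exp (- p) <= v * exp (- q) -> u / v <= exp (p - q).
Proof.
  intros Hv H. pose proof (exp_pos p). pose proof (exp_pos q).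
  rewrite !exp_Ropp in H. unfold Rminus. rewrite exp_plus, exp_Ropp.
  replace (u / v) with (u * / exp p * exp p / v) by (field; lra).
  replace (exp p * / exp q) with (v * / exp q * exp p / v) by (field; lra).
  unfold Rdiv. apply Rmult_le_compat_r; [apply Rlt_le, Rinv_0_lt_compat; lra|].
  apply Rmult_le_compat_r; lra.
Qed.

Lemma exp_le_ratio_of_damped u v p q : 0 < u -> 0 < v ->
  v * exp (- q) <= u * exp (- p) -> exp (p - q) <= u / v.
Proof.
  intros Hu Hv H. apply (ratio_le_exp_of_damped v u q p Hu) in H.
  replace (exp (p - q)) with (/ exp (q - p)) by (rewrite <- exp_Ropp; f_equal; ring).
  replace (u / v) with (/ (v / u)) by (field; lra).
  apply Rinv_le_contravar; [apply Rdiv_lt_0_compat; lra | exact H].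
Qed.

Section RiccatiComparison.

Variables y dy ddy : R -> R.
Hypothesis is_derive_y : forall x, is_derive y x (dy x).
Hypothesis is_derive_dy : forall x, is_derive dy x (ddy x).
Hypothesis y_ode : forall x, x <> 0 -> ddy x = (1 + 4 / x ^ 2) * y x - dy x / x.
Hypothesis y_pos : forall x, 0 < x -> 0 < y x.

Variables (U dU P : R -> R) (x0 : R).
Hypothesis x0_pos : 0 < x0.
Hypothesis is_derive_U : forall x, x0 <= x -> is_derive U x (dU x).
Hypothesis is_derive_P : forall x, x0 <= x -> is_derive P x (U x).

Let defect (t : R) : R := t * exp (P t) * (U t * y t - dy t).

(* [x e^P] is an integrating factor for the linear equation satisfied by [U y - y']. *)
Lemma is_derive_defect t : x0 <= t ->
  is_derive defect t (t * exp (P t) * y t * riccati_residual U dU t).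
Proof.
  intro Ht. unfold defect. eapply is_derive_eq.
  - apply (is_derive_mult (fun t => t * exp (P t)) (fun t => U t * y t - dy t)).
    + apply (is_derive_mult (fun t => t) (fun t => exp (P t))).
      * apply (is_derive_id (K := R_AbsRing)).
      * apply (is_derive_comp exp P); [apply is_derive_exp | apply is_derive_P; lra].
      * intros; apply Rmult_comm.
    + apply (is_derive_minus (fun t => U t * y t) dy); [|apply is_derive_dy].
      apply (is_derive_mult U y); [apply is_derive_U; lra | apply is_derive_y |].
      intros; apply Rmult_comm.
    + intros; apply Rmult_comm.
  - unfold plus, mult, minus, scal, opp, one; simpl; unfold mult, plus, opp; simpl.
    rewrite y_ode by lra. unfold riccati_residual. field. lra.
Qed.

Lemma defect_nondecreasing : (forall x, x0 <= x -> 0 <= riccati_residual U dU x) ->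
  forall a b, x0 <= a <= b -> defect a <= defect b.
Proof.
  intros Hres a b Hab.
  apply (le_of_is_derive_nonneg defect (fun t => t * exp (P t) * y t * riccati_residual U dU t));
    [lra | intros; apply is_derive_defect; lra |].
  intros t Ht. pose proof (y_pos t ltac:(lra)). pose proof (exp_pos (P t)).
  pose proof (Hres t ltac:(lra)). repeat apply Rmult_le_pos; lra.
Qed.

Lemma defect_nonincreasing : (forall x, x0 <= x -> riccati_residual U dU x <= 0) ->
  forall a b, x0 <= a <= b -> defect b <= defect a.
Proof.
  intros Hres a b Hab.
  enough (- defect a <= - defect b) by lra.
  apply (le_of_is_derive_nonneg (fun t => - defect t)
           (fun t => t * exp (P t) * y t * - riccati_residual U dU t)); [lra| |].
  - intros t Ht. eapply is_derive_eq; [apply (is_derive_opp defect), is_derive_defect; lra|].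
    unfold opp; simpl; ring.
  - intros t Ht. pose proof (y_pos t ltac:(lra)). pose proof (exp_pos (P t)).
    pose proof (Hres t ltac:(lra)). repeat apply Rmult_le_pos; lra.
Qed.

Lemma integrating_factor_pos t : x0 <= t -> 0 < t * exp (P t).
Proof. intro. apply Rmult_lt_0_compat; [lra | apply exp_pos]. Qed.

Lemma log_derivative_le : (forall x, x0 <= x -> 0 <= riccati_residual U dU x) ->
  dy x0 <= U x0 * y x0 -> forall x, x0 <= x -> dy x <= U x * y x.
Proof.
  intros Hres H0 x Hx.
  pose proof (defect_nondecreasing Hres x0 x ltac:(lra)) as Hmono. unfold defect in Hmono.
  pose proof (integrating_factor_pos x0 ltac:(lra)). pose proof (integrating_factor_pos x Hx).
  assert (0 <= x0 * exp (P x0) * (U x0 * y x0 - dy x0)) by (apply Rmult_le_pos; lra).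
  enough (0 <= U x * y x - dy x) by lra.
  apply (Rmult_le_reg_l (x * exp (P x))); lra.
Qed.

Lemma log_derivative_ge : (forall x, x0 <= x -> riccati_residual U dU x <= 0) ->
  U x0 * y x0 <= dy x0 -> forall x, x0 <= x -> U x * y x <= dy x.
Proof.
  intros Hres H0 x Hx.
  pose proof (defect_nonincreasing Hres x0 x ltac:(lra)) as Hmono. unfold defect in Hmono.
  pose proof (integrating_factor_pos x0 ltac:(lra)). pose proof (integrating_factor_pos x Hx).
  assert (x0 * exp (P x0) * (U x0 * y x0 - dy x0) <= 0).
  { rewrite <- (Rmult_0_r (x0 * exp (P x0))). apply Rmult_le_compat_l; lra. }
  enough (U x * y x - dy x <= 0) by lra.
  apply (Rmult_le_reg_l (x * exp (P x))); lra.
Qed.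

Lemma is_derive_damped t : x0 <= t ->
  is_derive (fun t => y t * exp (- P t)) t ((dy t - U t * y t) * exp (- P t)).
Proof.
  intro Ht. eapply is_derive_eq.
  - apply (is_derive_mult y (fun t => exp (- P t))); [apply is_derive_y | |].
    + apply (is_derive_comp exp (fun t => - P t)); [apply is_derive_exp|].
      apply (is_derive_opp P), is_derive_P; lra.
    + intros; apply Rmult_comm.
  - unfold plus, mult, scal, opp; simpl; unfold mult, plus, opp; simpl. ring.
Qed.

Lemma growth_le : (forall x, x0 <= x -> dy x <= U x * y x) ->
  forall a b, x0 <= a <= b -> y b / y a <= exp (P b - P a).
Proof.
  intros H a b Hab. apply ratio_le_exp_of_damped; [apply y_pos; lra|].
  enough (- (y a * exp (- P a)) <= - (y b * exp (- P b))) by lra.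
  apply (le_of_is_derive_nonneg (fun t => - (y t * exp (- P t)))
           (fun t => (U t * y t - dy t) * exp (- P t))); [lra| |].
  - intros t Ht. eapply is_derive_eq.
    + apply (is_derive_opp (fun t => y t * exp (- P t))), is_derive_damped; lra.
    + unfold opp; simpl; ring.
  - intros t Ht. pose proof (H t ltac:(lra)). pose proof (exp_pos (- P t)).
    apply Rmult_le_pos; lra.
Qed.

Lemma growth_ge : (forall x, x0 <= x -> U x * y x <= dy x) ->
  forall a b, x0 <= a <= b -> exp (P b - P a) <= y b / y a.
Proof.
  intros H a b Hab. apply exp_le_ratio_of_damped; [apply y_pos; lra .. |].
  apply (le_of_is_derive_nonneg (fun t => y t * exp (- P t))
           (fun t => (dy t - U t * y t) * exp (- P t)));
    [lra | intros; apply is_derive_damped; lra |].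
  intros t Ht. pose proof (H t ltac:(lra)). pose proof (exp_pos (- P t)).
  apply Rmult_le_pos; lra.
Qed.

End RiccatiComparison.

(* [U0] truncates the asymptotic expansion of [I_2'/I_2] at infinity; the exponentially decaying
   corrections make [U_up] and [U_lo] comparison functions on the whole half-line [x >= 20]. *)
Definition U0 (x : R) : R :=
  1 - 1 / (2 * x) + 15 / (8 * x ^ 2) + 15 / (8 * x ^ 3) + 135 / (128 * x ^ 4).
Definition dU0 (x : R) : R :=
  1 / (2 * x ^ 2) - 15 / (4 * x ^ 3) - 45 / (8 * x ^ 4) - 135 / (32 * x ^ 5).
Definition Q0 (x : R) : R := - 15 / 8 * / x - 15 / 16 * / x ^ 2 - 45 / 128 * / x ^ 3.

Definition U_up (x : R) : R := U0 x + 4 * exp (20 - x).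
Definition dU_up (x : R) : R := dU0 x - 4 * exp (20 - x).
Definition P_up (x : R) : R := x - ln x / 2 + Q0 x - 4 * exp (20 - x).

Definition U_lo (x : R) : R := U0 x - 2 / x ^ 5 - exp (20 - x).
Definition dU_lo (x : R) : R := dU0 x + 10 / x ^ 6 + exp (20 - x).
Definition P_lo (x : R) : R := x - ln x / 2 + Q0 x + / (2 * x ^ 4) + exp (20 - x).

Ltac nonzero_denominators := repeat split; try exact I;
  try (apply Rgt_not_eq, Rlt_gt; repeat apply Rmult_lt_0_compat; lra); try lra.

Lemma is_derive_U_up x : 0 < x -> is_derive U_up x (dU_up x).
Proof.
  intro. unfold U_up, dU_up, U0, dU0. auto_derive; nonzero_denominators. unfold Rminus. field. lra.
Qed.

Lemma is_derive_U_lo x : 0 < x -> is_derive U_lo x (dU_lo x).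
Proof.
  intro. unfold U_lo, dU_lo, U0, dU0. auto_derive; nonzero_denominators. unfold Rminus. field. lra.
Qed.

Lemma is_derive_P_up x : 0 < x -> is_derive P_up x (U_up x).
Proof.
  intro. unfold P_up, U_up, U0, Q0. auto_derive; nonzero_denominators. unfold Rminus. field. lra.
Qed.

Lemma is_derive_P_lo x : 0 < x -> is_derive P_lo x (U_lo x).
Proof.
  intro. unfold P_lo, U_lo, U0, Q0. auto_derive; nonzero_denominators. unfold Rminus. field. lra.
Qed.

Lemma exp_20_minus_bounds x : 20 <= x -> 0 < exp (20 - x) <= 1.
Proof.
  intro. split; [apply exp_pos|]. rewrite <- exp_0.
  destruct (Req_dec x 20) as [->|]; [rewrite Rminus_diag; lra|].
  apply Rlt_le, exp_increasing; lra.
Qed.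

Lemma riccati_residual_U_up x : 20 <= x -> 0 <= riccati_residual U_up dU_up x.
Proof.
  intro Hx. pose proof (exp_20_minus_bounds x Hx) as He. set (e := exp (20 - x)) in *.
  set (w := / x).
  assert (Hw : 0 < w <= / 20) by (split; [apply Rinv_0_lt_compat | apply Rinv_le_contravar]; lra).
  replace (riccati_residual U_up dU_up x)
    with (w ^ 5 * (45/16 + 3825/512 * w + 2025/512 * w ^ 2 + 18225/16384 * w ^ 3)
          + 4 * e * (1 + 15/4 * w ^ 2 + 15/4 * w ^ 3 + 135/64 * w ^ 4 + 4 * e))
    by (unfold riccati_residual, U_up, dU_up, U0, dU0, w; fold e; field; lra).
  assert (0 < w ^ 5) by (apply pow_lt; lra).
  apply Rplus_le_le_0_compat; apply Rmult_le_pos; nra.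
Qed.

Lemma riccati_residual_U_lo x : 20 <= x -> riccati_residual U_lo dU_lo x <= 0.
Proof.
  intro Hx. pose proof (exp_20_minus_bounds x Hx) as He. set (e := exp (20 - x)) in *.
  set (w := / x).
  assert (Hw : 0 < w <= / 20) by (split; [apply Rinv_0_lt_compat | apply Rinv_le_contravar]; lra).
  replace (riccati_residual U_lo dU_lo x)
    with (w ^ 5 * (-19/16 + 8945/512 * w - 1815/512 * w ^ 2 - 104655/16384 * w ^ 3
                   - 135/32 * w ^ 4 + 4 * w ^ 5)
          + e * (- 1 - 15/4 * w ^ 2 - 15/4 * w ^ 3 - 135/64 * w ^ 4 + 4 * w ^ 5 + e))
    by (unfold riccati_residual, U_lo, dU_lo, U0, dU0, w; fold e; field; lra).
  assert (0 < w ^ 5) by (apply pow_lt; lra).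
  assert (w ^ 2 <= w / 20) by nra. assert (w ^ 3 <= w ^ 2 / 20) by nra.
  assert (w ^ 4 <= w ^ 3 / 20) by nra. assert (w ^ 5 <= w ^ 4 / 20) by nra.
  assert (-19/16 + 8945/512 * w - 1815/512 * w ^ 2 - 104655/16384 * w ^ 3
          - 135/32 * w ^ 4 + 4 * w ^ 5 <= 0) by nra.
  assert (- 1 - 15/4 * w ^ 2 - 15/4 * w ^ 3 - 135/64 * w ^ 4 + 4 * w ^ 5 + e <= 0) by nra.
  nra.
Qed.

Lemma dbesselI2_le_U_up x : 20 <= x -> dbesselI2 x <= U_up x * besselI2 x.
Proof.
  apply (log_derivative_le besselI2 dbesselI2 ddbesselI2 is_derive_besselI2 is_derive_dbesselI2
           besselI2_ode besselI2_pos U_up dU_up P_up 20);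
    [lra | intros; apply is_derive_U_up; lra | intros; apply is_derive_P_up; lra
    | exact riccati_residual_U_up |].
  pose proof (dbesselI2_bounds 20 ltac:(lra)). pose proof (besselI2_pos 20 ltac:(lra)).
  assert (2 / 20 + 20 / 6 <= U_up 20).
  { unfold U_up, U0. rewrite Rminus_diag, exp_0. lra. }
  nra.
Qed.

Lemma U_lo_le_dbesselI2 x : 20 <= x -> U_lo x * besselI2 x <= dbesselI2 x.
Proof.
  apply (log_derivative_ge besselI2 dbesselI2 ddbesselI2 is_derive_besselI2 is_derive_dbesselI2
           besselI2_ode besselI2_pos U_lo dU_lo P_lo 20);
    [lra | intros; apply is_derive_U_lo; lra | intros; apply is_derive_P_lo; lra
    | exact riccati_residual_U_lo |].
  pose proof (dbesselI2_bounds 20 ltac:(lra)). pose proof (besselI2_pos 20 ltac:(lra)).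
  assert (U_lo 20 <= 0).
  { unfold U_lo, U0. rewrite Rminus_diag, exp_0. lra. }
  nra.
Qed.

Lemma besselI2_ratio_le a b : 20 <= a <= b -> besselI2 b / besselI2 a <= exp (P_up b - P_up a).
Proof.
  apply (growth_le besselI2 dbesselI2 is_derive_besselI2 besselI2_pos U_up P_up 20);
    [lra | intros; apply is_derive_P_up; lra | exact dbesselI2_le_U_up].
Qed.

Lemma besselI2_ratio_ge a b : 20 <= a <= b -> exp (P_lo b - P_lo a) <= besselI2 b / besselI2 a.
Proof.
  apply (growth_ge besselI2 dbesselI2 is_derive_besselI2 besselI2_pos U_lo P_lo 20);
    [lra | intros; apply is_derive_P_lo; lra | exact U_lo_le_dbesselI2].
Qed.

(** * Expansions at neighbouring arguments *)

Lemma small_power_bounds (w r : R) (k : nat) : 0 <= w <= r -> 0 <= w ^ k /\ w ^ S k <= r * w ^ k.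
Proof.
  intro Hw. assert (0 <= w ^ k) by (apply pow_le; lra).
  split; [assumption|]. simpl. apply Rmult_le_compat_r; lra.
Qed.

Lemma weighted_power_bounds (w a lo hi : R) (k j : nat) : 0 <= w -> 0 <= lo -> lo <= a <= hi ->
  lo ^ j * w ^ k <= w ^ k * a ^ j <= hi ^ j * w ^ k.
Proof.
  intros Hw Hlo Ha. assert (0 <= w ^ k) by (apply pow_le; lra).
  split; rewrite (Rmult_comm (w ^ k)); apply Rmult_le_compat_r; auto; apply pow_incr; lra.
Qed.

(* Polynomial inequalities in a small [w] (and [a] in a narrow interval) are linear in the
   monomials [w ^ k * a ^ j]; the bounds below make them provable by [lra]. *)
Ltac small_powers Hw n :=
  lazymatch type of Hw with 0 <= ?w <= ?r =>
  let rec go k := lazymatch k with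
    | O => idtac
    | S ?k' => pose proof (small_power_bounds w r k' Hw); go k' end in
  go n end.

Ltac weighted_powers Hw Ha n d :=
  lazymatch type of Hw with 0 <= ?w <= _ =>
  lazymatch type of Ha with ?lo <= ?a <= ?hi =>
  let Hw0 := fresh in let Hlo := fresh in
  assert (Hw0 : 0 <= w) by lra; assert (Hlo : 0 <= lo) by lra;
  let rec go k := lazymatch k with
    | O => idtac
    | S ?k' =>
      let rec go_j j := lazymatch j with
        | O => pose proof (weighted_power_bounds w a lo hi k' O Hw0 Hlo Ha)
        | S ?j' => pose proof (weighted_power_bounds w a lo hi k' j Hw0 Hlo Ha); go_j j' end in
      go_j d; go k' end in
  go n end end.

Ltac polynomial_bounds Hw Ha n d := small_powers Hw n; weighted_powers Hw Ha n d.

Lemma le_of_sq_le s q : 0 <= q -> s ^ 2 <= q ^ 2 -> s <= q.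
Proof. intros. apply Rsqr_incr_0_var; [rewrite !Rsqr_pow2; lra | assumption]. Qed.

Lemma le_inv_of_sq_mul_le s t q : 0 < s -> s ^ 2 = t -> q ^ 2 * t <= 1 -> q <= / s.
Proof.
  intros Hs Et H. apply le_of_sq_le; [apply Rlt_le, Rinv_0_lt_compat; lra|].
  rewrite pow_inv. apply (Rmult_le_reg_r (s ^ 2)); [apply pow_lt; lra|].
  rewrite Rinv_l by (apply pow_nonzero; lra). rewrite Et. lra.
Qed.

Lemma inv_le_of_sq_mul_ge s t q : 0 < s -> 0 <= q -> s ^ 2 = t -> 1 <= q ^ 2 * t -> / s <= q.
Proof.
  intros Hs Hq Et H. apply le_of_sq_le; [assumption|].
  rewrite pow_inv. apply (Rmult_le_reg_r (s ^ 2)); [apply pow_lt; lra|].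
  rewrite Rinv_l by (apply pow_nonzero; lra). rewrite Et. lra.
Qed.

Section SqrtExpansions.

Variables u sp sm : R.
Hypothesis u_small : 0 <= u <= / 1000.
Hypothesis sp_pos : 0 < sp.
Hypothesis sm_pos : 0 < sm.
Hypothesis sp_sq : sp ^ 2 = 1 + u.
Hypothesis sm_sq : sm ^ 2 = 1 - u.

Lemma inv_sp_bounds : 1 - u/2 + 3*u^2/8 - 5*u^3/16 <= / sp <= 1 - u/2 + 3*u^2/8.
Proof.
  small_powers u_small 8%nat. split.
  - apply (le_inv_of_sq_mul_le sp (1 + u)); auto; lra.
  - apply (inv_le_of_sq_mul_ge sp (1 + u)); auto; lra.
Qed.

Lemma inv_sm_bounds : 1 + u/2 + 3*u^2/8 + 5*u^3/16 <= / sm <= 1 + u/2 + 3*u^2/8 + u^3/2.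
Proof.
  small_powers u_small 8%nat. split.
  - apply (le_inv_of_sq_mul_le sm (1 - u)); auto; lra.
  - apply (inv_le_of_sq_mul_ge sm (1 - u)); auto; lra.
Qed.

Lemma sqrt_sum_bounds : - u^2/4 - u^3/8 <= sp + sm - 2 <= - u^2/4.
Proof.
  small_powers u_small 8%nat.
  assert (sp <= 1 + u/2 - u^2/8 + u^3/16) by (apply le_of_sq_le; lra).
  assert (sm <= 1 - u/2 - u^2/8 - u^3/16) by (apply le_of_sq_le; lra).
  assert (1 + u/2 - u^2/8 <= sp) by (apply le_of_sq_le; lra).
  assert (1 - u/2 - u^2/8 - u^3/8 <= sm) by (apply le_of_sq_le; lra).
  lra.
Qed.

Lemma inv_sum_bounds : 3 * u^2 / 4 <= / sp + / sm - 2 <= 3 * u^2 / 4 + u^3.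
Proof. pose proof inv_sp_bounds. pose proof inv_sm_bounds. small_powers u_small 4%nat. lra. Qed.

Ltac inv_power_bounds k :=
  pose proof inv_sp_bounds; pose proof inv_sm_bounds; small_powers u_small 14%nat;
  assert ((1 - u/2 + 3*u^2/8 - 5*u^3/16) ^ k <= (/ sp) ^ k) by (apply pow_incr; lra);
  assert ((1 + u/2 + 3*u^2/8 + 5*u^3/16) ^ k <= (/ sm) ^ k) by (apply pow_incr; lra);
  assert ((/ sp) ^ k <= (1 - u/2 + 3*u^2/8) ^ k) by (apply pow_incr; lra);
  assert ((/ sm) ^ k <= (1 + u/2 + 3*u^2/8 + u^3/2) ^ k) by (apply pow_incr; lra).

Lemma inv_sq_sum_bounds : 2 * u^2 <= (/ sp) ^ 2 + (/ sm) ^ 2 - 2 <= 3 * u^2.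
Proof. inv_power_bounds 2%nat. lra. Qed.

Lemma inv_cube_sum_bounds : 0 <= (/ sp) ^ 3 + (/ sm) ^ 3 - 2 <= 4 * u^2.
Proof. inv_power_bounds 3%nat. lra. Qed.

Lemma inv_fourth_bounds : - 2 * u - u^2 <= (/ sp) ^ 4 - 1 /\ (/ sm) ^ 4 - 1 <= 501/250 * u.
Proof. inv_power_bounds 4%nat. lra. Qed.

End SqrtExpansions.

Lemma exp_le_compat x y : x <= y -> exp x <= exp y.
Proof.
  intro. destruct (Req_dec x y) as [->|]; [lra|]. apply Rlt_le, exp_increasing; lra.
Qed.

Lemma exp_pow x (n : nat) : exp (INR n * x) = exp x ^ n.
Proof.
  induction n as [|n IH]; [simpl; rewrite Rmult_0_l; apply exp_0|].
  rewrite S_INR, Rmult_plus_distr_r, Rmult_1_l, exp_plus, IH. simpl. ring.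
Qed.

(* [exp ((c - 21) / 40) >= c / 40 >= 4], and [4 ^ 32 >= 40 ^ 8]. *)
Lemma pow8_le_exp c : 187 <= c -> c ^ 8 <= exp (c - 21).
Proof.
  intro Hc.
  replace (c - 21) with (INR 40 * ((c - 21) / 40)) by (simpl; field).
  rewrite exp_pow.
  assert (H1 : c / 40 <= exp ((c - 21) / 40)) by (pose proof (exp_ineq1_le ((c - 21) / 40)); lra).
  assert (H2 : (c / 40) ^ 40 <= exp ((c - 21) / 40) ^ 40) by (apply pow_incr; lra).
  assert (H3 : 4 ^ 32 <= (c / 40) ^ 32) by (apply pow_incr; lra).
  replace ((c / 40) ^ 40) with (c ^ 8 * ((c / 40) ^ 32 / 40 ^ 8)) in H2 by field.
  assert (0 <= c ^ 8) by (apply pow_le; lra).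
  assert (1 <= (c / 40) ^ 32 / 40 ^ 8).
  { apply (Rmult_le_reg_r (40 ^ 8)); [apply pow_lt; lra|].
    unfold Rdiv. rewrite Rmult_assoc, Rinv_l, Rmult_1_r by (apply pow_nonzero; lra).
    simpl in H3 |- *. lra. }
  nra.
Qed.

Lemma exp_le_quadratic x : x <= 0 -> exp x <= 1 + x + x ^ 2 / 2.
Proof.
  intro Hx.
  enough (H : - (1 + x + x ^ 2 / 2 - exp x) <= - (1 + 0 + 0 ^ 2 / 2 - exp 0))
    by (rewrite exp_0 in H; lra).
  apply (le_of_is_derive_nonneg (fun t => - (1 + t + t ^ 2 / 2 - exp t))
           (fun t => - (1 + t - exp t)));
    [lra | intros; auto_derive; [exact I | field] |].
  intros t _. pose proof (exp_ineq1_le t). lra.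
Qed.

Lemma product_ratio_le ym yc yp e1 e2 : 0 < ym -> 0 < yc -> 0 < yp ->
  yp / yc <= exp e1 -> exp e2 <= yc / ym -> ym * yp / yc ^ 2 <= exp (e1 - e2).
Proof.
  intros Hm Hc Hp H1 H2. pose proof (exp_pos e2).
  replace (ym * yp / yc ^ 2) with (yp / yc * / (yc / ym)) by (field; lra).
  unfold Rminus. rewrite exp_plus, exp_Ropp.
  apply Rmult_le_compat; [apply Rlt_le, Rdiv_lt_0_compat; lra
    | apply Rlt_le, Rinv_0_lt_compat, Rdiv_lt_0_compat; lra | lra
    | apply Rinv_le_contravar; lra].
Qed.

Lemma product_ratio_ge ym yc yp e1 e2 : 0 < ym -> 0 < yc ->
  exp e1 <= yp / yc -> yc / ym <= exp e2 -> exp (e1 - e2) <= ym * yp / yc ^ 2.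
Proof.
  intros Hm Hc H1 H2. pose proof (exp_pos e1). pose proof (exp_pos e2).
  assert (0 < yc / ym) by (apply Rdiv_lt_0_compat; lra).
  replace (ym * yp / yc ^ 2) with (yp / yc * / (yc / ym)) by (field; lra).
  unfold Rminus. rewrite exp_plus, exp_Ropp.
  apply Rmult_le_compat; [lra | apply Rlt_le, Rinv_0_lt_compat; lra | lra
    | apply Rinv_le_contravar; lra].
Qed.

Lemma exp_ln_geometric_mean c p m k : 0 < c -> 0 < p -> 0 < m ->
  exp (ln c - (ln p + ln m) / 2 + k) = c / sqrt (p * m) * exp k.
Proof.
  intros. assert (0 < sqrt (p * m)) by (apply sqrt_lt_R0; nra).
  assert (E : ln (sqrt (p * m)) = (ln p + ln m) / 2).
  { rewrite <- ln_mult by lra. rewrite <- (sqrt_sqrt (p * m)) at 2 by nra.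
    rewrite ln_mult by lra. field. }
  rewrite <- E. unfold Rminus. rewrite !exp_plus, exp_Ropp, !exp_ln by lra. reflexivity.
Qed.

(* Collected from the second-difference bounds below, with [w = 1/c]; [4 w^8] absorbs the
   exponentially small terms of [P_up] and [P_lo]. *)
Definition K_up (w a : R) : R :=
  - a^2/4 * w^3 - 45/32 * a^2 * w^5 - (15/8 * a^2 - 501/500 * a) * w^6 + 4 * w^8.

Definition K_lo (w a : R) : R :=
  - a^2/4 * w^3 - (a^3/8 + 45/32 * a^2) * w^5 - (45/16 * a^2 + a) * w^6
  - (15/8 * a^3 + 45/32 * a^2) * w^7 - (a^2/2 + 4) * w^8.

(* [Psi n] and [Xi n] in terms of [w = 1/v] and [a = 3 pi^2/2]: [9 pi^4/16 = a^2/4],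
   [27 pi^6/8 = a^3] and [405 pi^8/2048 = 5 a^4/128]. *)
Definition Psi_poly (w a : R) : R :=
  (1 - a^2/4 * w^3 + a^4/16 * w^6) * (1 - 308 * w^5 - 286 * w^6).
Definition Xi_poly (w a : R) : R :=
  (1 - a^2/4 * w^3 - a^3 * w^5 - 5/128 * a^4 * w^7) * (1 - 309 * w^5 - 535 * w^6).

Section Polynomials.
Variables w a : R.
Hypothesis w_small : 0 <= w <= / 187.
Hypothesis a_bounds : 29607/2000 <= a <= 29609/2000.

Lemma K_up_nonpos : K_up w a <= 0.
Proof. unfold K_up. polynomial_bounds w_small a_bounds 9%nat 4%nat. lra. Qed.

Lemma quadratic_K_up_le_Psi_poly : 1 + K_up w a + K_up w a ^ 2 / 2 <= Psi_poly w a.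
Proof. unfold K_up, Psi_poly. polynomial_bounds w_small a_bounds 17%nat 4%nat. lra. Qed.

Lemma Xi_poly_le_linear_K_lo : Xi_poly w a <= 1 + K_lo w a.
Proof. unfold K_lo, Xi_poly. polynomial_bounds w_small a_bounds 14%nat 4%nat. lra. Qed.
End Polynomials.

Lemma bounds_ext {lo x hi lo' x' hi' : R} : lo <= x <= hi ->
  lo' = lo -> x' = x -> hi' = hi -> lo' <= x' <= hi'.
Proof. intros H -> -> ->; exact H. Qed.

Lemma scale_bounds k lo x hi : 0 < k -> lo <= x <= hi -> k * lo <= k * x <= k * hi.
Proof. intros. split; apply Rmult_le_compat_l; lra. Qed.

Section NeighbouringArguments.

Variables c a p m : R.
Hypothesis c_large : 187 <= c.
Hypothesis a_bounds : 29607/2000 <= a <= 29609/2000.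
Hypothesis p_pos : 0 < p.
Hypothesis m_pos : 0 < m.
Hypothesis p_sq : p ^ 2 = c ^ 2 + a.
Hypothesis m_sq : m ^ 2 = c ^ 2 - a.

Let u := a / c ^ 2.
Let w := / c.

Lemma w_pos : 0 < w.
Proof. unfold w; apply Rinv_0_lt_compat; lra. Qed.

Lemma w_small : 0 <= w <= / 187.
Proof. unfold w; split; [apply Rlt_le, Rinv_0_lt_compat | apply Rinv_le_contravar]; lra. Qed.

Lemma u_small : 0 <= u <= / 1000.
Proof.
  unfold u. assert (187 ^ 2 <= c ^ 2) by (apply pow_incr; lra).
  split; [apply Rmult_le_pos; [lra | apply Rlt_le, Rinv_0_lt_compat; nra]|].
  apply (Rmult_le_reg_r (c ^ 2)); [nra|]. unfold Rdiv.
  rewrite Rmult_assoc, Rinv_l by nra. lra.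
Qed.

Lemma sp_pos : 0 < p / c. Proof. apply Rdiv_lt_0_compat; lra. Qed.
Lemma sm_pos : 0 < m / c. Proof. apply Rdiv_lt_0_compat; lra. Qed.
Lemma sp_sq : (p / c) ^ 2 = 1 + u.
Proof. unfold u, Rdiv. rewrite Rpow_mult_distr, p_sq. field. lra. Qed.
Lemma sm_sq : (m / c) ^ 2 = 1 - u.
Proof. unfold u, Rdiv. rewrite Rpow_mult_distr, m_sq. field. lra. Qed.

Lemma w_pow_pos k : 0 < w ^ k.
Proof. apply pow_lt, w_pos. Qed.

Ltac rescale k expansion :=
  apply (bounds_ext (scale_bounds k _ _ _ ltac:(first [lra | apply w_pow_pos])
    (expansion u (p / c) (m / c) u_small sp_pos sm_pos sp_sq sm_sq)));
  unfold u, w; field; lra.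

Lemma second_difference_id : - a^2/4 * w^3 - a^3/8 * w^5 <= p + m - 2 * c <= - a^2/4 * w^3.
Proof. rescale c sqrt_sum_bounds. Qed.

Lemma second_difference_inv :
  3 * a^2 / 4 * w^5 <= / p + / m - 2 / c <= 3 * a^2 / 4 * w^5 + a^3 * w^7.
Proof. rescale (w ^ 1) inv_sum_bounds. Qed.

Lemma second_difference_inv_sq : 2 * a^2 * w^6 <= / p^2 + / m^2 - 2 / c^2 <= 3 * a^2 * w^6.
Proof. rescale (w ^ 2) inv_sq_sum_bounds. Qed.

Lemma second_difference_inv_cube : 0 <= / p^3 + / m^3 - 2 / c^3 <= 4 * a^2 * w^7.
Proof. rescale (w ^ 3) inv_cube_sum_bounds. Qed.

Lemma inv_fourth_differences :
  - a * w^6 - a^2/2 * w^8 <= / (2 * p^4) - / (2 * c^4) /\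
  / (2 * m^4) - / (2 * c^4) <= 501/500 * a * w^6.
Proof.
  destruct (inv_fourth_bounds u (p / c) (m / c) u_small sp_pos sm_pos sp_sq sm_sq) as [Hp Hm].
  pose proof (w_pow_pos 4).
  apply (Rmult_le_compat_l (w ^ 4 / 2)) in Hp, Hm; try lra.
  unfold u, w in *. split.
  - replace (/ (2 * p^4) - / (2 * c^4)) with ((/ c) ^ 4 / 2 * ((/ (p / c)) ^ 4 - 1))
      by (field; lra).
    replace (- a * (/ c)^6 - a^2/2 * (/ c)^8) with ((/ c) ^ 4 / 2 * (- 2 * (a / c^2) - (a / c^2)^2))
      by (field; lra).
    exact Hp.
  - replace (/ (2 * m^4) - / (2 * c^4)) with ((/ c) ^ 4 / 2 * ((/ (m / c)) ^ 4 - 1))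
      by (field; lra).
    replace (501/500 * a * (/ c)^6) with ((/ c) ^ 4 / 2 * (501/250 * (a / c^2))) by (field; lra).
    exact Hm.
Qed.

Lemma neighbours_order : c - 1 <= m <= c /\ c <= p.
Proof.
  assert (m <= c) by nra. split; [split; [apply le_of_sq_le; nra | assumption] | nra].
Qed.

Lemma exp_tail_bounds :
  0 < exp (20 - p) /\ exp (20 - p) <= exp (20 - c) <= exp (20 - m) /\ exp (20 - m) <= w ^ 8.
Proof.
  pose proof neighbours_order. pose proof (pow8_le_exp c c_large).
  split; [apply exp_pos|]. split; [split; apply exp_le_compat; lra|].
  apply (Rle_trans _ (exp (- (c - 21)))); [apply exp_le_compat; lra|].
  unfold w. rewrite exp_Ropp, pow_inv. apply Rinv_le_contravar; [apply pow_lt; lra | assumption].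
Qed.

Lemma exponent_upper :
  P_up p - P_up c + (P_lo m - P_lo c) <= ln c - (ln p + ln m) / 2 + K_up w a.
Proof.
  pose proof second_difference_id.
  pose proof second_difference_inv.
  pose proof second_difference_inv_sq.
  pose proof second_difference_inv_cube.
  pose proof inv_fourth_differences.
  pose proof exp_tail_bounds.
  unfold P_up, P_lo, Q0, K_up. lra.
Qed.

Lemma exponent_lower :
  ln c - (ln p + ln m) / 2 + K_lo w a <= P_lo p - P_lo c + (P_up m - P_up c).
Proof.
  pose proof second_difference_id.
  pose proof second_difference_inv.
  pose proof second_difference_inv_sq.
  pose proof second_difference_inv_cube.
  pose proof inv_fourth_differences.
  pose proof exp_tail_bounds.
  unfold P_up, P_lo, Q0, K_lo. lra.
Qed.

Lemma geometric_factor_pos : 0 < c / sqrt (p * m).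
Proof. apply Rdiv_lt_0_compat; [lra | apply sqrt_lt_R0; nra]. Qed.

Lemma besselI2_ratio_upper :
  besselI2 m * besselI2 p / besselI2 c ^ 2 <= c / sqrt (p * m) * Psi_poly w a.
Proof.
  destruct neighbours_order as [[Hm Hmc] Hcp].
  eapply Rle_trans.
  { apply (product_ratio_le _ _ _ (P_up p - P_up c) (P_lo c - P_lo m));
      [apply besselI2_pos; lra .. | apply besselI2_ratio_le; lra | apply besselI2_ratio_ge; lra]. }
  replace (P_up p - P_up c - (P_lo c - P_lo m)) with (P_up p - P_up c + (P_lo m - P_lo c)) by ring.
  eapply Rle_trans; [apply exp_le_compat, exponent_upper|].
  rewrite exp_ln_geometric_mean by lra.
  apply Rmult_le_compat_l; [apply Rlt_le, geometric_factor_pos|].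
  pose proof (K_up_nonpos w a w_small a_bounds).
  eapply Rle_trans; [apply exp_le_quadratic; assumption|].
  apply quadratic_K_up_le_Psi_poly; [apply w_small | assumption].
Qed.

Lemma besselI2_ratio_lower :
  c / sqrt (p * m) * Xi_poly w a <= besselI2 m * besselI2 p / besselI2 c ^ 2.
Proof.
  destruct neighbours_order as [[Hm Hmc] Hcp].
  eapply Rle_trans; cycle 1.
  { apply (product_ratio_ge _ _ _ (P_lo p - P_lo c) (P_up c - P_up m));
      [apply besselI2_pos; lra .. | apply besselI2_ratio_ge; lra | apply besselI2_ratio_le; lra]. }
  replace (P_lo p - P_lo c - (P_up c - P_up m)) with (P_lo p - P_lo c + (P_up m - P_up c)) by ring.
  eapply Rle_trans; [|apply exp_le_compat, exponent_lower].
  rewrite exp_ln_geometric_mean by lra.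
  apply Rmult_le_compat_l; [apply Rlt_le, geometric_factor_pos|].
  eapply Rle_trans; [apply Xi_poly_le_linear_K_lo; [apply w_small | assumption] |].
  apply exp_ineq1_le.
Qed.

End NeighbouringArguments.

Lemma PI_bounds : 3.14159 <= PI <= 3.1416.
Proof.
  destruct (PI_2_3_7_ineq 2) as [H1 H2].
  unfold sum_f_R0, tg_alt, PI_2_3_7_tg, Ratan_seq in H1, H2. simpl in H1, H2. lra.
Qed.

Lemma three_halves_PI_sq_bounds : 29607/2000 <= 3 * PI ^ 2 / 2 <= 29609/2000.
Proof. pose proof PI_bounds. split; nra. Qed.

Lemma PI_sqrt_sq t : 0 <= t -> (PI * sqrt t) ^ 2 = PI ^ 2 * t.
Proof. intro. rewrite Rpow_mult_distr, <- Rsqr_pow2 with (x := sqrt t), Rsqr_sqrt by lra. ring. Qed.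

Lemma PI_sqrt_pos t : 0 < t -> 0 < PI * sqrt t.
Proof. intro. apply Rmult_lt_0_compat; [apply PI_RGT_0 | apply sqrt_lt_R0; lra]. Qed.

Section ArgumentsOfTheTheorem.
Variable n : nat.
Hypothesis n_large : (2363 <= n)%nat.

Lemma INR_n_large : 2363 <= INR n.
Proof. apply le_INR in n_large. replace (INR 2363) with 2363 in n_large by (simpl; lra). lra. Qed.

Lemma bv_sq : bv n ^ 2 = PI ^ 2 * (3 * INR n / 2).
Proof. pose proof INR_n_large. apply PI_sqrt_sq. lra. Qed.

Lemma bvp_sq : bvp n ^ 2 = bv n ^ 2 + 3 * PI ^ 2 / 2.
Proof. pose proof INR_n_large. rewrite bv_sq. unfold bvp. rewrite PI_sqrt_sq by lra. field. Qed.

Lemma bvm_sq : bvm n ^ 2 = bv n ^ 2 - 3 * PI ^ 2 / 2.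
Proof. pose proof INR_n_large. rewrite bv_sq. unfold bvm. rewrite PI_sqrt_sq by lra. field. Qed.

Lemma bvp_pos : 0 < bvp n.
Proof. pose proof INR_n_large. apply PI_sqrt_pos. lra. Qed.

Lemma bvm_pos : 0 < bvm n.
Proof. pose proof INR_n_large. apply PI_sqrt_pos. lra. Qed.

Lemma bv_large : 187 <= bv n.
Proof.
  pose proof INR_n_large. pose proof PI_bounds. pose proof bv_sq.
  apply le_of_sq_le; [apply Rlt_le, PI_sqrt_pos; lra | nra].
Qed.

Lemma Psi_eq : Psi n = Psi_poly (/ bv n) (3 * PI ^ 2 / 2).
Proof. pose proof bv_large. unfold Psi, Psi_poly. field. lra. Qed.

Lemma Xi_eq : Xi n = Xi_poly (/ bv n) (3 * PI ^ 2 / 2).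
Proof. pose proof bv_large. unfold Xi, Xi_poly. field. lra. Qed.

End ArgumentsOfTheTheorem.

Theorem lemma4p2 (n : nat) (hn : (2363 <= n)%nat) :
  bv n / sqrt (bvp n * bvm n) * Xi n
    <= besselI2 (bvm n) * besselI2 (bvp n) / (besselI2 (bv n)) ^ 2 /\
  besselI2 (bvm n) * besselI2 (bvp n) / (besselI2 (bv n)) ^ 2
    <= bv n / sqrt (bvp n * bvm n) * Psi n.
Proof.
  rewrite (Psi_eq n hn), (Xi_eq n hn).
  pose proof (bv_large n hn). pose proof three_halves_PI_sq_bounds.
  pose proof (bvp_pos n hn). pose proof (bvm_pos n hn).
  pose proof (bvp_sq n hn). pose proof (bvm_sq n hn).
  split; [apply besselI2_ratio_lower | apply besselI2_ratio_upper]; assumption.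
Qed.
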